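(* Let $\lambda>0$ and $0<\theta<\pi/2$. For every $n\ge0$, $\mathcal C_{\pi/2-\theta}(V_n)\cap H_n=\emptyset$.
   Context: $\mathcal P_\lambda$: homogeneous Poisson point process of intensity $\lambda$ on $\mathbb R^2$ under its Palm distribution (point added at origin $o$). Polar coordinates $(r_v,\varphi_v)$, $\varphi_v\in[-\pi,\pi)$ from $e_1$; for $\alpha\in(0,\pi/2)$, $\mathcal C_\alpha=\{v:r_v>0,|\varphi_v|\le\alpha\}$, $\mathcal C_\alpha(v)=v+\mathcal C_\alpha$. Navigation: $V_0=o$, $V_{i+1}=\arg\min\{|v-V_i|:v\in\mathcal P_\lambda\cap\mathcal C_\theta(V_i)\}$, $U_i=V_i-V_{i-1}$. History sets: $H_0=\emptyset$, $H_1=\mathcal C_\theta(U_1)\cap B(o,|U_1|)$, $H_n=\mathcal C_\theta(V_{n-1}+U_n)\cap(H_{n-1}\cup B(V_{n-1},|U_n|))$ for $n\ge2$, where $B(x,r)$ is the open ball of radius $r$ about $x$. *)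

From Stdlib Require Import Reals Lra List.
Open Scope R_scope.

Definition pt : Type := (R * R)%type.
Definition origin : pt := (0, 0).
Definition padd (x y : pt) : pt := (fst x + fst y, snd x + snd y).
Definition psub (x y : pt) : pt := (fst x - fst y, snd x - snd y).
Definition pnorm (x : pt) : R := sqrt (fst x ^ 2 + snd x ^ 2).
Definition pdist (x y : pt) : R := pnorm (psub x y).

Definition cone0 (alpha : R) (v : pt) : Prop :=
  exists r phi, r > 0 /\ - PI <= phi < PI /\ Rabs phi <= alpha /\
    v = (r * cos phi, r * sin phi).
Definition cone (alpha : R) (x : pt) (w : pt) : Prop := cone0 alpha (psub w x).

Definition ball (x : pt) (r : R) (w : pt) : Prop := pdist w x < r.

Definition nav_step (theta : R) (P : pt -> Prop) (x y : pt) : Prop :=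
  P y /\ cone theta x y /\
  forall v, P v -> cone theta x v -> pdist y x <= pdist v x.

Definition U (V : nat -> pt) (i : nat) : pt := psub (V i) (V (pred i)).

Fixpoint H (theta : R) (V : nat -> pt) (n : nat) : pt -> Prop :=
  match n with
  | O => fun _ => False
  | S m =>
      match m with
      | O => fun w => cone theta (U V 1) w /\ ball origin (pnorm (U V 1)) w
      | S _ => fun w =>
          cone theta (padd (V m) (U V n)) w /\
          (H theta V m w \/ ball (V m) (pnorm (U V n)) w)
      end
  end.

Definition locally_finite (P : pt -> Prop) : Prop :=
  forall x r, exists l : list pt, forall y, P y -> pdist y x < r -> In y l.

(* If w lies in H_n then w lies in one of the balls B(V_k, |U_(k+1)|), k < n.
   The navigation steps all point into the convex cone C_theta, so V_n lies in
   C_theta(V_k), and by minimality of V_(k+1) we get |U_(k+1)| <= |V_n - V_k|.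
   If moreover w lies in C_(pi/2 - theta)(V_n), the angle between V_n - V_k and
   w - V_n is at most pi/2, hence |w - V_k| >= |V_n - V_k| >= |U_(k+1)|,
   contradicting w in B(V_k, |U_(k+1)|). *)
From Stdlib Require Import Reals Lra Lia.
From Coquelicot Require Import Rcomplements.
Open Scope R_scope.

(* Polar-free description of the cone C_a, valid for 0 < a < pi/2. *)
Definition sector (a : R) (v : pt) : Prop :=
  0 < fst v /\ Rabs (snd v) * cos a <= sin a * fst v.

Lemma atan_le x y : x <= y -> atan x <= atan y.
Proof.
  intros [Hlt | ->]; [left; apply atan_increasing; exact Hlt | right; reflexivity].
Qed.

Lemma Rabs_atan_le a t : 0 <= a < PI / 2 -> Rabs t <= tan a -> Rabs (atan t) <= a.
Proof.
  intros Ha Ht; apply Rabs_le_between in Ht; apply Rabs_le_between.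
  rewrite <- (atan_tan a) by lra; rewrite <- atan_opp.
  split; apply atan_le; lra.
Qed.

Section Sector.

Variable a : R.
Hypothesis Ha : 0 < a < PI / 2.

Let cos_a_pos : 0 < cos a.
Proof. apply cos_gt_0; lra. Qed.

Let sin_a_pos : 0 < sin a.
Proof. apply sin_gt_0; lra. Qed.

Lemma sector_of_cone0 v : cone0 a v -> sector a v.
Proof.
  intros [r [phi [Hr [_ [Hphi ->]]]]]; apply Rabs_le_between in Hphi; unfold sector; simpl.
  assert (Hcos : 0 < cos phi) by (apply cos_gt_0; lra).
  assert (Hminus : 0 <= sin (a - phi)) by (apply sin_ge_0; lra).
  assert (Hplus : 0 <= sin (a + phi)) by (apply sin_ge_0; lra).
  rewrite sin_minus in Hminus; rewrite sin_plus in Hplus.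
  split; [apply Rmult_lt_0_compat; lra |].
  rewrite Rabs_mult, (Rabs_right r) by lra.
  destruct (Rle_or_lt 0 (sin phi));
    [rewrite Rabs_right by lra | rewrite Rabs_left by lra]; nra.
Qed.

Lemma cone0_of_sector v : sector a v -> cone0 a v.
Proof.
  destruct v as [x y]; intros [Hx Hy]; simpl in *.
  set (t := y / x).
  assert (Ht : Rabs t <= tan a).
  { unfold t, tan; rewrite Rabs_div, (Rabs_right x) by lra.
    apply Rmult_le_reg_r with (x * cos a); [nra |].
    field_simplify; lra. }
  assert (Hs : 0 < sqrt (1 + t²)) by (apply sqrt_lt_R0; unfold Rsqr; nra).
  pose proof (atan_bound t).
  exists (x * sqrt (1 + t²)), (atan t); repeat split; try lra; try nra.
  - apply Rabs_atan_le; lra.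
  - rewrite cos_atan, sin_atan; f_equal;
      [| replace y with (x * t) at 1 by (unfold t; field; lra)]; field; lra.
Qed.
Lemma sector_add u v : sector a u -> sector a v -> sector a (padd u v).
Proof.
  intros [Hu1 Hu2] [Hv1 Hv2]; unfold sector, padd; simpl.
  pose proof (Rabs_triang (snd u) (snd v)).
  split; nra.
Qed.

Lemma cone_trans x y z : cone a x y -> cone a y z -> cone a x z.
Proof.
  intros Hxy Hyz; apply cone0_of_sector.
  replace (psub z x) with (padd (psub y x) (psub z y))
    by (unfold padd, psub; simpl; f_equal; ring).
  apply sector_add; apply sector_of_cone0; assumption.
Qed.

Lemma sector_compl_dot_nonneg u d :
  sector a u -> sector (PI / 2 - a) d -> 0 <= fst u * fst d + snd u * snd d.
Proof.
  destruct u as [u1 u2], d as [d1 d2]; intros [Hu1 Hu2] [Hd1 Hd2]; simpl in *.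
  rewrite cos_shift, sin_shift in Hd2.
  assert (Habs : Rabs u2 * Rabs d2 * (cos a * sin a) <= u1 * d1 * (cos a * sin a)).
  { replace (Rabs u2 * Rabs d2 * (cos a * sin a))
      with ((Rabs u2 * cos a) * (Rabs d2 * sin a)) by ring.
    replace (u1 * d1 * (cos a * sin a)) with ((sin a * u1) * (cos a * d1)) by ring.
    apply Rmult_le_compat; try apply Rmult_le_pos; try apply Rabs_pos; lra. }
  apply Rmult_le_reg_r in Habs; [| nra].
  rewrite <- Rabs_mult in Habs.
  pose proof (Rle_abs (- (u2 * d2))) as Hopp; rewrite Rabs_Ropp in Hopp.
  lra.
Qed.

Lemma pnorm_le_add_sector_compl u d :
  sector a u -> sector (PI / 2 - a) d -> pnorm u <= pnorm (padd u d).
Proof.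
  intros Hu Hd; pose proof (sector_compl_dot_nonneg u d Hu Hd) as Hdot.
  destruct u as [u1 u2], d as [d1 d2]; unfold pnorm, padd; simpl in *.
  apply sqrt_le_1_alt; nra.
Qed.

End Sector.

Lemma H_sub_balls theta V n w : V 0%nat = origin -> H theta V n w ->
  exists k, (k < n)%nat /\ pdist w (V k) < pdist (V (S k)) (V k).
Proof.
  intros HV0; induction n as [| [| m] IH]; simpl; [tauto | |].
  - intros [_ Hball]; exists 0%nat; split; [lia |].
    unfold ball, U in Hball; simpl in Hball; rewrite HV0 in *; exact Hball.
  - intros [_ [Hprev | Hball]].
    + destruct (IH Hprev) as [k [Hk Hd]]; exists k; split; [lia | exact Hd].
    + exists (S m); split; [lia | exact Hball].
Qed.

Section Navigation.

Variables (theta : R) (P : pt -> Prop) (V : nat -> pt).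
Hypothesis Htheta : 0 < theta < PI / 2.
Hypothesis Hnav : forall i, nav_step theta P (V i) (V (S i)).

Lemma nav_cone k m : (k < m)%nat -> cone theta (V k) (V m).
Proof.
  induction 1 as [| m _ IH]; [apply (Hnav k) |].
  apply cone_trans with (V m); [exact Htheta | exact IH | apply (Hnav m)].
Qed.

Lemma nav_step_le k m : (k < m)%nat -> pdist (V (S k)) (V k) <= pdist (V m) (V k).
Proof.
  intros Hkm; destruct m as [| m]; [lia |].
  apply (Hnav k); [apply (Hnav m) | apply nav_cone; exact Hkm].
Qed.

End Navigation.

Theorem lemma4p4 (lam theta : R) (P : pt -> Prop) (V : nat -> pt) :
  0 < lam -> 0 < theta < PI / 2 ->
  locally_finite P -> P origin ->
  V 0%nat = origin ->
  (forall i : nat, nav_step theta P (V i) (V (S i))) ->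
  forall (n : nat) (w : pt),
    ~ (cone (PI / 2 - theta) (V n) w /\ H theta V n w).
Proof.
  intros _ Htheta _ _ HV0 Hnav n w [Hcone HH].
  destruct (H_sub_balls theta V n w HV0 HH) as [k [Hkn Hball]].
  pose proof (nav_step_le theta P V Htheta Hnav k n Hkn) as Hstep.
  assert (Hfar : pdist (V n) (V k) <= pdist w (V k)).
  { unfold pdist.
    replace (psub w (V k)) with (padd (psub (V n) (V k)) (psub w (V n)))
      by (unfold padd, psub; simpl; f_equal; ring).
    apply (pnorm_le_add_sector_compl theta Htheta).
    - apply sector_of_cone0; [exact Htheta | exact (nav_cone theta P V Htheta Hnav k n Hkn)].
    - apply sector_of_cone0; [lra | exact Hcone]. }
  lra.
Qed.
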